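(* Let $k,n\in\mathbb N$ with $k\le n$, let $\lambda\vdash n$ be a partition, let $\pi\in\mathfrak S_n$ be a permutation with $\pi(l)=l$ for all $1\le l<k$, and let $T\in\operatorname{T}(\lambda)$ be a tabloid. Set $\tilde T:=\pi\circ T$, and for each cell $x\in\lambda$ let $T_x$ and $\tilde T_x$ be the intermediate tabloids arising in the Novelli--Pak--Stoyanovskii sorting of $T$ and of $\tilde T$, respectively. Then for every $x\in\lambda$ the permutation $\pi_x\in\mathfrak S_n$ defined by $\tilde T_x=\pi_x\circ T_x$ satisfies $\pi_x(l)=l$ for all $1\le l<k$.
   Context: A partition $\lambda\vdash n$ is identified with its Young diagram $\{(i,j)\in\mathbb Z^2: i\ge1,\ 1\le j\le\lambda_i\}$ (cells in matrix coordinates, row $i$, column $j$). A tabloid of shape $\lambda$ is a bijection $T:\lambda\to\{1,\dots,n\}$; $\operatorname{T}(\lambda)$ is the set of tabloids. $\mathfrak S_n$ acts by $\sigma(T):=\sigma\circ T$. The right and bottom neighbours of $(i,j)$ are the cells $(i,j+1),(i+1,j)$ lying in $\lambda$. Order the cells by $(i,j)\prec(k,l)$ iff $j<l$, or $j=l$ and $i<k$; list them as $z_1\prec\dots\prec z_n$. Novelli--Pak--Stoyanovskii sorting of $T$: set $T_{z_n}:=T$; for $m=n-1,n-2,\dots,1$, obtain $T_{z_m}$ from $T_{z_{m+1}}$ by the following slide $\sigma_{z_m}$ at $z_m$: the entry $a$ sitting in $z_m$ is repeatedly exchanged with the smaller of the entries in its current right and bottom neighbours, as long as that smaller entry is less than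 $a$ (if $a$ is smaller than all of them, or there are none, it stops). Thus $T_{z_m}=\sigma_{z_m}\circ T_{z_{m+1}}$ where $\sigma_{z_m}$ is a cyclic permutation of entries. The output $T_{z_1}$ is a standard Young tableau. *)

From mathcomp Require Import all_boot.
Set Implicit Arguments. Unset Strict Implicit. Unset Printing Implicit Defensive.

Definition is_partition (n : nat) (lam : seq nat) : bool :=
  [&& sorted geq lam, all (fun x => 0 < x) lam & sumn lam == n].

(* Cells of the Young diagram, matrix coordinates, 1-based:
   (i,j) with i >= 1, 1 <= j <= lam_i  (lam_i = nth 0 lam i.-1). *)
Definition in_shape (lam : seq nat) (c : nat * nat) : bool :=
  [&& 1 <= c.1, 1 <= c.2 & c.2 <= nth 0 lam c.1.-1].

(* S_n as the bijections of {1,...,n} (values outside are irrelevant). *)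
Definition is_perm (n : nat) (p : nat -> nat) : Prop :=
  (forall l, 1 <= l <= n -> 1 <= p l <= n) /\
  (forall l l', 1 <= l <= n -> 1 <= l' <= n -> p l = p l' -> l = l').

(* Tabloids: bijections from the cells of lam onto {1,...,n}
   (represented as total functions on nat*nat; off-shape values irrelevant). *)
Definition is_tabloid (lam : seq nat) (n : nat) (T : nat * nat -> nat) : Prop :=
  (forall c, in_shape lam c -> 1 <= T c <= n) /\
  (forall c c', in_shape lam c -> in_shape lam c' -> T c = T c' -> c = c') /\
  (forall l, 1 <= l <= n -> exists2 c, in_shape lam c & T c = l).

(* The cells listed in the order z_1 < ... < z_n: (i,j) < (k,l) iff j < l,
   or j = l and i < k  (column by column, top to bottom). *)
Definition cells_list (lam : seq nat) : seq (nat * nat) :=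
  flatten [seq [seq (i, j) | i <- iota 1 (size lam) & j <= nth 0 lam i.-1]
          | j <- iota 1 (head 0 lam)].

Definition swap_entries (T : nat * nat -> nat) (p m : nat * nat) : nat * nat -> nat :=
  fun c => if c == p then T m else if c == m then T p else T c.

Fixpoint slide_aux (lam : seq nat) (fuel : nat) (p : nat * nat)
    (T : nat * nat -> nat) : nat * nat -> nat :=
  match fuel with
  | 0 => T
  | f.+1 =>
    let r := (p.1, p.2.+1) in
    let b := (p.1.+1, p.2) in
    let cand :=
      match in_shape lam r, in_shape lam b with
      | true, true => Some (if T r < T b then r else b)
      | true, false => Some r
      | false, true => Some b
      | false, false => None
      end in
    match cand with
    | Some m => if T m < T p then slide_aux lam f m (swap_entries T p m) else T
    | None => T
    end
  end.

(* The slide sigma_z at z; the fuel size lam + lam_1 bounds the number of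
   moves (each move strictly increases i + j). *)
Definition slide (lam : seq nat) (z : nat * nat) (T : nat * nat -> nat) :=
  slide_aux lam (size lam + head 0 lam) z T.

(* NPS intermediate tabloid T_x: with x = z_m, T_{z_n} = T and
   T_{z_m} = sigma_{z_m} (T_{z_{m+1}}), i.e. the slides at z_{n-1}, ..., z_m
   applied in that order. *)
Definition nps_inter (lam : seq nat) (T : nat * nat -> nat) (x : nat * nat) :=
  let zs := cells_list lam in
  let i := index x zs in
  foldr (slide lam) T (take ((size zs).-1 - i) (drop i zs)).

(** Call an entry big if it is at least k.  Since pi fixes every l < k, it maps
    big entries to big entries, so T and pi o T have the same small entries in
    the same cells and big entries in the remaining ones; this is preserved by
    every slide of the sorting.  While the sliding entry or its smaller
    neighbour is small, both slides make the same moves.  Once both are big, the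
    already sorted cells have the property that every cell weakly south-east of
    a big entry holds a big entry, so the rest of the slide only permutes big
    entries.  Hence T_x and (pi o T)_x again have the same small entries, and
    pi_x = (pi o T)_x o T_x^-1 fixes every l < k. *)
From mathcomp Require Import all_boot zify.
Set Implicit Arguments. Unset Strict Implicit. Unset Printing Implicit Defensive.

Definition cell_le (c d : nat * nat) : bool := (c.1 <= d.1) && (c.2 <= d.2).

Definition col_lt (c d : nat * nat) : bool :=
  (c.2 < d.2) || ((c.2 == d.2) && (c.1 < d.1)).

Definition succ_cell (p d : nat * nat) : bool :=
  (d == (p.1, p.2.+1)) || (d == (p.1.+1, p.2)).

Lemma cell_le_refl : reflexive cell_le.
Proof. by move=> c; rewrite /cell_le !leqnn. Qed.

Lemma cell_le_trans : transitive cell_le.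
Proof. by move=> [? ?] [? ?] [? ?]; rewrite /cell_le /=; lia. Qed.

Lemma col_lt_trans : transitive col_lt.
Proof. by move=> [? ?] [? ?] [? ?]; rewrite /col_lt /=; lia. Qed.

Lemma col_lt_irr : irreflexive col_lt.
Proof. by move=> [? ?]; rewrite /col_lt /=; lia. Qed.

Lemma cell_le_col_lt c d : cell_le c d -> c != d -> col_lt c d.
Proof. by case: c d => [? ?] [? ?]; rewrite /cell_le /col_lt xpair_eqE /=; lia. Qed.

Lemma succ_cell_le p d : succ_cell p d -> cell_le p d.
Proof. by case/orP=> /eqP->; rewrite /cell_le /=; lia. Qed.

Lemma succ_cell_sum p d : succ_cell p d -> d.1 + d.2 = (p.1 + p.2).+1.
Proof. by case/orP=> /eqP-> /=; lia. Qed.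

Lemma succ_cell_neq p d : succ_cell p d -> d != p.
Proof. by move=> /succ_cell_sum h; apply/eqP=> e; move: h; rewrite e; lia. Qed.

Section Shape.

Variable lam : seq nat.
Hypothesis lam_sorted : sorted geq lam.
Local Notation sh := (in_shape lam).
Local Notation zs := (cells_list lam).

Lemma in_shape_bound c : sh c -> c.1 <= size lam /\ c.2 <= head 0 lam.
Proof.
case/and3P=> h1 h2 h3; have [lt_c1|] := ltnP c.1.-1 (size lam); last first.
  by move=> le_sz; move: h3; rewrite nth_default //; lia.
split; first lia.
apply: leq_trans h3 _; move: lam_sorted lt_c1; case: (lam) => [|a l] //= srt.
have ge_trans : transitive geq by move=> x y z /=; lia.
have /allP le_a := order_path_min ge_trans srt.
by case: (c.1.-1) => [|i] //= lt_i; apply: le_a; apply: mem_nth.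
Qed.

Lemma in_shape_le c d : sh d -> cell_le c d -> 0 < c.1 -> 0 < c.2 -> sh c.
Proof.
move=> hd /andP[le1 le2] c1 c2; have [bd _] := in_shape_bound hd.
case/and3P: hd => d1 _ d3; rewrite /in_shape c1 c2 /=.
have ge_trans : transitive geq by move=> x y z /=; lia.
have ge_refl : reflexive geq by move=> x /=.
have mono := sorted_leq_nth ge_trans ge_refl 0 lam_sorted.
have : nth 0 lam d.1.-1 <= nth 0 lam c.1.-1.
  by apply: mono; rewrite ?inE; lia.
lia.
Qed.

Lemma in_shape_succ_le p d : sh p -> sh d -> cell_le p d -> d != p ->
  exists n, [/\ sh n, succ_cell p n & cell_le n d].
Proof.
case: p d => [i j] [i' j'] /and3P[/= i1 j1 _] hd /andP[/= le_i le_j] ne.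
have [lt_i|ge_i] := ltnP i i'.
  exists (i.+1, j); split; rewrite /succ_cell /cell_le ?eqxx ?orbT //=; last lia.
  by apply: in_shape_le hd _ _ _; rewrite /cell_le /=; lia.
have lt_j : j < j' by move: ne; rewrite xpair_eqE; lia.
exists (i, j.+1); split; rewrite /succ_cell /cell_le ?eqxx //=; last lia.
by apply: in_shape_le hd _ _ _; rewrite /cell_le /=; lia.
Qed.

Lemma mem_cells_list (c : nat * nat) : (c \in zs) = sh c.
Proof.
apply/idP/idP.
  case/flatten_mapP=> j; rewrite mem_iota => /andP[j1 _].
  case/mapP=> i; rewrite mem_filter mem_iota => /andP[le_j /andP[i1 _]] ->.
  by rewrite /in_shape /= i1 j1 le_j.
move=> hc; have [b1 b2] := in_shape_bound hc; case/and3P: hc => h1 h2 h3.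
apply/flatten_mapP; exists c.2; first by rewrite mem_iota; lia.
apply/mapP; exists c.1; last by case: c {b1 b2 h1 h2 h3}.
by rewrite mem_filter mem_iota h3 /=; lia.
Qed.

Lemma cells_list_pairwise : pairwise col_lt zs.
Proof.
pose col j := [seq (i, j) | i <- iota 1 (size lam) & j <= nth 0 lam i.-1].
have col_sorted j : sorted col_lt (col j).
  rewrite sorted_map; apply: sorted_filter; first by move=> x y z; apply: col_lt_trans.
  apply: sub_sorted (iota_ltn_sorted 1 (size lam)) => x y /= lt_xy.
  by rewrite /col_lt /= eqxx lt_xy orbT.
rewrite (_ : zs = flatten (map col (iota 1 (head 0 lam)))) //.
elim: (head 0 lam) 1 => [|L IH] a //=.
rewrite pairwise_cat IH andbT -sorted_pairwise ?col_sorted ?andbT;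
  last exact: col_lt_trans.
apply/allrelP=> c d /mapP[i _ ->] /flatten_mapP[j]; rewrite mem_iota => hj.
by case/mapP=> i' _ ->; rewrite /col_lt /=; lia.
Qed.

Lemma drop_cells_list_up j c d : c \in drop j zs -> sh d -> cell_le c d ->
  d \in drop j zs.
Proof.
move=> hc hd hcd; have [<-//|ne] := eqVneq c d.
have /allrelP before : allrel col_lt (take j zs) (drop j zs).
  have := cells_list_pairwise.
  by rewrite -{1}(cat_take_drop j zs) pairwise_cat => /and3P[].
have : d \in take j zs ++ drop j zs by rewrite cat_take_drop mem_cells_list.
rewrite mem_cat => /orP[hdt|//].
by have := col_lt_trans (before _ _ hdt hc) (cell_le_col_lt hcd ne); rewrite col_lt_irr.
Qed.

End Shape.

Section Slide.

Variable lam : seq nat.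
Local Notation sh := (in_shape lam).
Implicit Types (T : nat * nat -> nat) (c d m p : nat * nat).

Definition slide_target p T : option (nat * nat) :=
  let r := (p.1, p.2.+1) in
  let b := (p.1.+1, p.2) in
  match sh r, sh b with
  | true, true => Some (if T r < T b then r else b)
  | true, false => Some r
  | false, true => Some b
  | false, false => None
  end.

Lemma slide_auxS f p T : slide_aux lam f.+1 p T =
  if slide_target p T is Some m then
    if T m < T p then slide_aux lam f m (swap_entries T p m) else T
  else T.
Proof. by []. Qed.

Lemma slide_target_none p T d : slide_target p T = None -> sh d -> ~~ succ_cell p d.
Proof.
rewrite /slide_target /succ_cell; case E1: (sh _); case E2: (sh _) => // _ hd.
by apply/negP; case/orP=> /eqP e; rewrite e ?E1 ?E2 in hd.
Qed.

Lemma slide_target_some p T m : slide_target p T = Some m ->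
  [/\ sh m, succ_cell p m & forall d, sh d -> succ_cell p d -> T m <= T d].
Proof.
rewrite /slide_target /succ_cell; case E1: (sh _); case E2: (sh _) => //= -[<-].
- by case: ltnP => h; split; rewrite ?eqxx ?orbT // => d _ /orP[] /eqP ->; lia.
- split; rewrite ?eqxx // => d hd /orP[] /eqP e; rewrite e ?E2 // in hd *.
- split; rewrite ?eqxx ?orbT // => d hd /orP[] /eqP e; rewrite e ?E1 // in hd *.
Qed.

Lemma slide_target_isSome p T T' :
  isSome (slide_target p T) = isSome (slide_target p T').
Proof. by rewrite /slide_target; case: (sh _); case: (sh _). Qed.

Lemma slide_out f p T c : ~~ cell_le p c -> slide_aux lam f p T c = T c.
Proof.
elim: f p T => [//|f IH] p T hpc; rewrite slide_auxS.
case E: (slide_target p T) => [m|] //; case: ifP => // _.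
have [_ hpm _] := slide_target_some E; have le_pm := succ_cell_le hpm.
rewrite IH; last by apply: contra hpc; apply: cell_le_trans.
rewrite /swap_entries; case: eqP => [e|_]; first by rewrite e cell_le_refl in hpc.
by case: eqP => [e|_] //; rewrite e le_pm in hpc.
Qed.

Lemma slide_up (P : pred nat) f p T : sh p ->
  (forall d, sh d -> cell_le p d -> P (T d)) ->
  forall d, sh d -> cell_le p d -> P (slide_aux lam f p T d).
Proof.
elim: f p T => [//|f IH] p T hp HP d hd hpd; rewrite slide_auxS.
case E: (slide_target p T) => [m|]; last exact: HP.
case: ifP => _; last exact: HP.
have [hm hpm _] := slide_target_some E; have le_pm := succ_cell_le hpm.
have Hswap e : sh e -> cell_le p e -> P (swap_entries T p m e).
  move=> he hpe; rewrite /swap_entries.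
  by case: eqP => _; [|case: eqP => _]; apply: HP; rewrite ?cell_le_refl.
case hmd: (cell_le m d); last by rewrite slide_out ?hmd //; exact: Hswap.
by apply: IH hm _ _ hd hmd => e he hme; apply: Hswap he (cell_le_trans le_pm hme).
Qed.

Variable k : nat.

(* [T] and [T'] have the same entries below [k] and big entries in the same cells. *)
Definition agree_below T T' := forall c, sh c -> minn (T c) k = minn (T' c) k.

Lemma agree_small T T' c : agree_below T T' -> sh c -> T c < k -> T' c = T c.
Proof. by move=> A hc; have := A c hc; lia. Qed.

Lemma agree_big T T' c : agree_below T T' -> sh c -> (k <= T c) = (k <= T' c).
Proof. by move=> A hc; have := A c hc; lia. Qed.

Lemma agree_ltn T T' x y : agree_below T T' -> sh x -> sh y -> T x < k ->
  (T' x < T' y) = (T x < T y) /\ (T' y < T' x) = (T y < T x).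
Proof. by move=> A hx hy; have := A x hx; have := A y hy; lia. Qed.

Lemma agree_swap T T' p m : agree_below T T' -> sh p -> sh m ->
  agree_below (swap_entries T p m) (swap_entries T' p m).
Proof.
move=> A hp hm c hc; rewrite /swap_entries.
by case: eqP => _; [|case: eqP => _]; apply: A.
Qed.

Lemma slide_target_small p T T' m : agree_below T T' ->
  slide_target p T = Some m -> T m < k -> slide_target p T' = Some m.
Proof.
move=> A; rewrite /slide_target; case E1: (sh _); case E2: (sh _) => //= -[<-] //.
case: ifP => lt_rb small.
  by rewrite (agree_ltn A E1 E2 small).1 lt_rb.
by rewrite (agree_ltn A E2 E1 small).2 lt_rb.
Qed.

Lemma agree_slide_up f p T T' : sh p -> agree_below T T' ->
  (forall d, sh d -> cell_le p d -> k <= T d) ->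
  agree_below (slide_aux lam f p T) (slide_aux lam f p T').
Proof.
move=> hp A big_T c hc; case hpc: (cell_le p c); last first.
  by rewrite !slide_out ?hpc //; exact: A.
have big_T' d : sh d -> cell_le p d -> k <= T' d.
  by move=> hd hpd; rewrite -(agree_big A hd); exact: big_T.
have := slide_up (P := leq k) f hp big_T hc hpc.
have := slide_up (P := leq k) f hp big_T' hc hpc.
by rewrite /=; lia.
Qed.

Hypothesis lam_sorted : sorted geq lam.

Definition big_monotone (R : pred (nat * nat)) T :=
  forall c d, R c -> sh d -> cell_le c d -> k <= T c -> k <= T d.

Variable R : pred (nat * nat).
Hypothesis R_up : forall c d, R c -> sh d -> cell_le c d -> R d.

Lemma big_monotone_succ p T d : sh p -> R p -> big_monotone (predD1 R p) T ->
  (forall n, sh n -> succ_cell p n -> k <= T n) ->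
  sh d -> cell_le p d -> d != p -> k <= T d.
Proof.
move=> hp hRp M big_succ hd hpd hdp.
have [n [hn hpn hnd]] := in_shape_succ_le lam_sorted hp hd hpd hdp.
apply: (M n) hd hnd (big_succ n hn hpn).
by rewrite /= (succ_cell_neq hpn) (R_up hRp hn (succ_cell_le hpn)).
Qed.

Lemma big_monotone_stop p T : sh p -> R p -> big_monotone (predD1 R p) T ->
  (forall n, sh n -> succ_cell p n -> T p <= T n) -> big_monotone R T.
Proof.
move=> hp hRp M le_succ c d hRc hd hcd hb.
have [ecp|hcp] := eqVneq c p; last by apply: (M c d); rewrite //= hcp.
rewrite ecp in hcd hb; have [->//|hdp] := eqVneq d p.
apply: big_monotone_succ hd hcd hdp => // n hn hpn.
by have := le_succ n hn hpn; lia.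
Qed.

Lemma big_monotone_swap p m T : sh p -> R p -> slide_target p T = Some m ->
  T m < T p -> big_monotone (predD1 R p) T ->
  big_monotone (predD1 R m) (swap_entries T p m).
Proof.
move=> hp hRp E lt_mp M; have [hm hpm min_m] := slide_target_some E.
have le_pm := succ_cell_le hpm; have hmp := succ_cell_neq hpm.
move=> c d /andP[hcm hRc] hd hcd; rewrite /swap_entries (negbTE hcm).
have [ecp|hcp] := eqVneq c p.
  rewrite ecp in hcd * => hb; have [//|hdp] := eqVneq d p.
  have [_|hdm] := eqVneq d m; first exact: leq_trans hb (ltnW lt_mp).
  apply: big_monotone_succ hd hcd hdp => // n hn hpn.
  exact: leq_trans hb (min_m n hn hpn).
have hc : predD1 R p c by rewrite /= hcp.
move=> hb; have [edp|hdp] := eqVneq d p.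
  by apply: (M c m) hc hm _ hb; apply: cell_le_trans le_pm; rewrite -edp.
have [edm|hdm] := eqVneq d m; last exact: (M c d).
by rewrite edm in hcd; exact: leq_trans (M c m hc hm hcd hb) (ltnW lt_mp).
Qed.

Lemma big_monotone_slide f p T : sh p -> R p ->
  size lam + head 0 lam < p.1 + p.2 + f ->
  big_monotone (predD1 R p) T -> big_monotone R (slide_aux lam f p T).
Proof.
elim: f p T => [|f IH] p T hp hRp fuel M.
  apply: big_monotone_stop hp hRp M _ => n hn /succ_cell_sum hpn.
  by have := in_shape_bound lam_sorted hn; lia.
rewrite slide_auxS; case E: (slide_target p T) => [m|]; last first.
  apply: big_monotone_stop hp hRp M _ => n hn hpn.
  by rewrite (negbTE (slide_target_none E hn)) in hpn.
have [hm hpm min_m] := slide_target_some E.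
case: ifP => lt_mp; last first.
  apply: big_monotone_stop hp hRp M _ => n hn hpn.
  by have := min_m n hn hpn; move/negbT: lt_mp; lia.
apply: IH hm (R_up hRp hm (succ_cell_le hpm)) _ (big_monotone_swap hp hRp E lt_mp M).
by have := succ_cell_sum hpm; lia.
Qed.

Lemma agree_slide f p T T' : sh p -> R p -> big_monotone (predD1 R p) T ->
  agree_below T T' -> agree_below (slide_aux lam f p T) (slide_aux lam f p T').
Proof.
elim: f p T T' => [//|f IH] p T T' hp hRp M A.
case E: (slide_target p T) => [m|]; last first.
  have E' : slide_target p T' = None.
    by have := slide_target_isSome p T T'; rewrite E; case: slide_target.
  by rewrite !slide_auxS E E'.
have [hm hpm min_m] := slide_target_some E.
have [small_m|big_m] := ltnP (T m) k.
  rewrite !slide_auxS E (slide_target_small A E small_m) (agree_ltn A hm hp small_m).1.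
  case: ifP => lt_mp //; apply: IH => //; last exact: agree_swap.
    exact: R_up hRp hm (succ_cell_le hpm).
  exact: big_monotone_swap.
have [small_p|big_p] := ltnP (T p) k.
  case E': (slide_target p T') => [m'|]; last first.
    by have := slide_target_isSome p T T'; rewrite E E'.
  have [hm' hpm' _] := slide_target_some E'.
  have big_m' : k <= T' m' by rewrite -(agree_big A hm'); have := min_m m' hm' hpm'; lia.
  rewrite !slide_auxS E E' (agree_small A hp small_p).
  rewrite ltnNge (ltnW (leq_trans small_p big_m)).
  by rewrite ltnNge (ltnW (leq_trans small_p big_m')).
apply: agree_slide_up => // d hd hpd; have [->//|hdp] := eqVneq d p.
apply: big_monotone_succ hd hpd hdp => // n hn hpn.
by have := min_m n hn hpn; lia.
Qed.

End Slide.

Lemma perm_fix_minn n k (pi : nat -> nat) : is_perm n pi ->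
  (forall l, 1 <= l < k -> pi l = l) -> forall v, 1 <= v <= n -> minn (pi v) k = minn v k.
Proof.
move=> [pi_rng pi_inj] pi_fix v hv; have [small_v|big_v] := ltnP v k.
  by rewrite pi_fix //; lia.
have [small_pv|] := ltnP (pi v) k; last by lia.
have hpv := pi_rng v hv.
have : pi (pi v) = pi v by apply: pi_fix; lia.
by move=> /pi_inj-/(_ hpv hv); lia.
Qed.

Lemma is_perm_surj n (pi : nat -> nat) : is_perm n pi ->
  forall l, 1 <= l <= n -> exists2 v, 1 <= v <= n & pi v = l.
Proof.
move=> [pi_rng pi_inj] l hl.
have sub : {subset map pi (iota 1 n) <= iota 1 n}.
  move=> w /mapP[v]; rewrite !mem_iota => hv ->.
  by have := pi_rng v; rewrite add1n ltnS; lia.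
have uniq_pi : uniq (map pi (iota 1 n)).
  rewrite map_inj_in_uniq ?iota_uniq // => u v; rewrite !mem_iota => hu hv.
  by apply: pi_inj; lia.
have [_ eq_mem] := uniq_min_size uniq_pi sub (eq_leq (esym (size_map pi _))).
have : l \in map pi (iota 1 n) by rewrite eq_mem mem_iota; lia.
by case/mapP=> v; rewrite mem_iota => hv ->; exists v => //; lia.
Qed.

Lemma is_tabloid_perm_comp lam n (pi : nat -> nat) T : is_perm n pi ->
  is_tabloid lam n T -> is_tabloid lam n (pi \o T).
Proof.
move=> pi_perm [rT [iT sT]]; have [pi_rng pi_inj] := pi_perm; split; [|split].
- by move=> c hc; apply/pi_rng/rT.
- by move=> c c' hc hc' /pi_inj e; apply: iT => //; apply: e; apply: rT.
- move=> l hl; have [v hv <-] := is_perm_surj pi_perm hl.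
  by have [c hc <-] := sT v hv; exists c.
Qed.

Section Tabloid.

Variables (lam : seq nat) (n : nat).
Hypothesis lam_sorted : sorted geq lam.
Local Notation sh := (in_shape lam).
Local Notation zs := (cells_list lam).
Implicit Types (T : nat * nat -> nat) (c m p : nat * nat).

Lemma is_tabloid_swap T p m : sh p -> sh m ->
  is_tabloid lam n T -> is_tabloid lam n (swap_entries T p m).
Proof.
move=> hp hm [rT [iT sT]].
pose tau c := if c == p then m else if c == m then p else c.
have swapE c : swap_entries T p m c = T (tau c).
  by rewrite /swap_entries /tau; case: eqP => //; case: eqP.
have tau_sh c : sh c -> sh (tau c) by rewrite /tau; case: eqP => //; case: eqP.
have tauK c : tau (tau c) = c.
  rewrite /tau; have [->|hcp] := eqVneq c p; first by rewrite eqxx; case: eqVneq.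
  by have [->|hcm] := eqVneq c m; rewrite ?eqxx ?(negbTE hcp) ?(negbTE hcm).
split; [|split].
- by move=> c hc; rewrite swapE; apply/rT/tau_sh.
- move=> c c' hc hc'; rewrite !swapE => /iT-/(_ (tau_sh c hc) (tau_sh c' hc')) e.
  by rewrite -(tauK c) e tauK.
- by move=> l /sT[c hc <-]; exists (tau c); rewrite ?swapE ?tauK //; apply: tau_sh.
Qed.

Lemma is_tabloid_slide f p T : sh p ->
  is_tabloid lam n T -> is_tabloid lam n (slide_aux lam f p T).
Proof.
elim: f p T => [//|f IH] p T hp hT; rewrite slide_auxS.
case E: (slide_target lam p T) => [m|] //; case: ifP => // _.
have [hm _ _] := slide_target_some E.
exact: IH hm (is_tabloid_swap hp hm hT).
Qed.

Lemma is_tabloid_nps_inter T x :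
  is_tabloid lam n T -> is_tabloid lam n (nps_inter lam T x).
Proof.
move=> hT; rewrite /nps_inter.
have : all sh (take ((size zs).-1 - index x zs) (drop (index x zs) zs)).
  by apply/allP=> c /mem_take/mem_drop; rewrite (mem_cells_list lam_sorted).
elim: (take _ _) => [//|z s IH] /= /andP[hz hs].
exact: is_tabloid_slide hz (IH hs).
Qed.

Lemma tabloid_relabel U U' : is_tabloid lam n U -> is_tabloid lam n U' ->
  exists pix, is_perm n pix /\ forall c, sh c -> U' c = pix (U c).
Proof.
move=> [rU [iU sU]] [rU' [iU' _]].
pose inv l := nth (0, 0) zs (index l (map U zs)).
have invP l : 1 <= l <= n -> sh (inv l) /\ U (inv l) = l.
  move=> /sU[c hc <-].
  have hU : U c \in map U zs by rewrite map_f ?(mem_cells_list lam_sorted).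
  have hidx : index (U c) (map U zs) < size zs by rewrite -(size_map U) index_mem.
  split; first by rewrite -(mem_cells_list lam_sorted) /inv mem_nth.
  by rewrite /inv -(nth_map (0, 0) 0) // nth_index.
exists (U' \o inv); split; [split|].
- by move=> l /invP[hl _]; apply: rU'.
- move=> l l' /invP[hl el] /invP[hl' el'] /= e.
  by rewrite -el -el' (iU' _ _ hl hl' e).
- by move=> c hc /=; have [hi ei] := invP _ (rU c hc); rewrite (iU _ _ hi hc ei).
Qed.

Variable k : nat.

(* [nps_inter] slides along [drop j zs] without its last cell. *)
Lemma foldr_slide_agree T T' s j : agree_below lam k T T' ->
  s ++ drop (size zs).-1 zs = drop j zs ->
  big_monotone lam k (fun c => c \in drop j zs) (foldr (slide lam) T s) /\
  agree_below lam k (foldr (slide lam) T s) (foldr (slide lam) T' s).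
Proof.
move=> A; elim: s j => [|z s IH] j /= E.
  split=> // c d hc hd hcd; have hd' := drop_cells_list_up lam_sorted hc hd hcd.
  rewrite -E /= in hc hd'.
  have : size (drop (size zs).-1 zs) <= 1 by rewrite size_drop; lia.
  by case: (drop _ zs) hc hd' => [|a [|? ?]] //=; rewrite !inE => /eqP-> /eqP->.
have E' : drop j zs = z :: drop j.+1 zs.
  by rewrite -add1n -drop_drop drop1 -E.
have [M A'] := IH j.+1 (congr1 behead (etrans E E')).
set R := fun c => c \in drop j zs.
have hRz : R z by rewrite /R E' mem_head.
have hz : sh z by move: hRz; rewrite /R => /mem_drop; rewrite (mem_cells_list lam_sorted).
have R_up c d : R c -> sh d -> cell_le c d -> R d by apply: drop_cells_list_up.
have Mz : big_monotone lam k (predD1 R z) (foldr (slide lam) T s).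
  by move=> c d /andP[hcz]; rewrite /R E' inE (negbTE hcz); apply: M.
have fuel : size lam + head 0 lam < z.1 + z.2 + (size lam + head 0 lam).
  by case/and3P: hz => *; lia.
split; first exact (big_monotone_slide lam_sorted R_up hz hRz fuel Mz).
exact (agree_slide lam_sorted R_up _ hz hRz Mz A').
Qed.

Lemma agree_nps_inter T T' x : sh x -> agree_below lam k T T' ->
  agree_below lam k (nps_inter lam T x) (nps_inter lam T' x).
Proof.
move=> hx A; rewrite /nps_inter; set i := index x zs.
have lt_i : i < size zs by rewrite index_mem (mem_cells_list lam_sorted).
have Es : take ((size zs).-1 - i) (drop i zs) ++ drop (size zs).-1 zs = drop i zs.
  rewrite -{2}(cat_take_drop ((size zs).-1 - i) (drop i zs)) drop_drop.
  by congr (_ ++ drop _ _); lia.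
exact: (foldr_slide_agree A Es).2.
Qed.

End Tabloid.

Theorem lemma1 (k n : nat) (lam : seq nat) (pi : nat -> nat)
    (T : nat * nat -> nat) :
  k <= n ->
  is_partition n lam ->
  is_perm n pi ->
  (forall l, 1 <= l < k -> pi l = l) ->
  is_tabloid lam n T ->
  forall x, in_shape lam x ->
  exists pix : nat -> nat,
    is_perm n pix /\
    (forall c, in_shape lam c ->
       nps_inter lam (pi \o T) x c = pix (nps_inter lam T x c)) /\
    (forall l, 1 <= l < k -> pix l = l).
Proof.
move=> le_kn /and3P[lam_sorted _ _] pi_perm pi_fix hT x hx.
have A : agree_below lam k T (pi \o T).
  by move=> c hc; rewrite /= (perm_fix_minn pi_perm pi_fix) //; apply: hT.1.
have hU := is_tabloid_nps_inter lam_sorted x hT.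
have hU' := is_tabloid_nps_inter lam_sorted x (is_tabloid_perm_comp pi_perm hT).
have [pix [pix_perm pixE]] := tabloid_relabel lam_sorted hU hU'.
exists pix; split=> //; split=> [c hc|l hl]; first exact: pixE.
have l_rng : 0 < l <= n by case/andP: hl => -> lt_lk; exact: leq_trans (ltnW lt_lk) le_kn.
have [c hc Uc] := hU.2.2 l l_rng.
rewrite -Uc -pixE //; apply: (agree_small (agree_nps_inter lam_sorted hx A) hc).
by rewrite Uc; case/andP: hl.
Qed.
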